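(* Let $J\ge1$ and $n\ge J^2$, and let $z_1,\dots,z_n\in\mathbb{R}$ be distinct. For $K\in\{1,\dots,J\}$ let $T_K=\{(\tau,\mu)\in\mathbb{R}^K\times\mathbb{R}^K:\tau_j>0,\ \sum_{j=1}^K\tau_j=1,\ \mu_1<\dots<\mu_K\}$. Let $(\tau,\mu)\in T_{K_1}$ and $(\varsigma,\nu)\in T_{K_2}$ with $K_1,K_2\le J$. If for every $i=1,\dots,n$ $$\frac{\sum_{k=1}^{K_1}\tau_k(z_i-\mu_k)\phi(z_i-\mu_k)}{\sum_{k=1}^{K_1}\tau_k\phi(z_i-\mu_k)}=\frac{\sum_{j=1}^{K_2}\varsigma_j(z_i-\nu_j)\phi(z_i-\nu_j)}{\sum_{j=1}^{K_2}\varsigma_j\phi(z_i-\nu_j)},$$ then $K_1=K_2$, $\tau=\varsigma$ and $\mu=\nu$.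
   Context: $\phi$ denotes the standard normal density. The displayed equality is equivalent to $\frac{\partial}{\partial z_i}\big[Q(\tau,\mu,z)-Q(\varsigma,\nu,z)\big]=0$, where $Q(\tau,\mu,z)=-\sum_{i=1}^n\log\sum_{k}\tau_k\phi(z_i-\mu_k)$. *)

From Stdlib Require Import Reals Lra Lia.
Open Scope R_scope.

Definition phi (x : R) : R := exp (- (x ^ 2) / 2) / sqrt (2 * PI).

Fixpoint rsum (K : nat) (f : nat -> R) : R :=
  match K with
  | O => 0
  | S k => rsum k f + f k
  end.

(* (tau, mu) in T_K ; vectors in R^K are represented by their
   coordinates at indices 0..K-1 *)
Definition InT (K : nat) (tau mu : nat -> R) : Prop :=
  (forall j, (j < K)%nat -> 0 < tau j) /\
  rsum K tau = 1 /\
  (forall j, (S j < K)%nat -> mu j < mu (S j)).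

Definition ratio (K : nat) (tau mu : nat -> R) (z : R) : R :=
  rsum K (fun k => tau k * (z - mu k) * phi (z - mu k)) /
  rsum K (fun k => tau k * phi (z - mu k)).

(* Since phi (z - m) = phi z * exp (- m^2 / 2) * exp (m z), the denominator of [ratio K tau mu z]
   is phi z times the exponential sum h(z) = sum_k tau_k e^{-mu_k^2/2} e^{mu_k z}, and the ratio
   equals z - h'(z) / h(z).  Equality of the two ratios at z is therefore the vanishing of the
   Wronskian-type expression h1' h2 - h1 h2', itself an exponential sum with K1 K2 <= n terms.
   By Rolle's theorem an exponential sum with m terms and m distinct real zeros vanishes
   identically, so (h1 / h2)' = 0 and h1 = C h2.  Exponential sums with positive coefficients and
   increasing exponents are uniquely determined (compare the dominant terms at +oo), which gives
   K1 = K2, mu = nu and tau = C vs; finally C = 1 because both weight vectors sum to 1. *)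
From Stdlib Require Import Reals Lra Lia IndefiniteDescription.
From Coquelicot Require Import Coquelicot.
Open Scope R_scope.

Lemma rsum_ext K f g : (forall k, (k < K)%nat -> f k = g k) -> rsum K f = rsum K g.
Proof.
  induction K as [|K IH]; intros H; simpl; [reflexivity|].
  rewrite IH, H; [reflexivity | lia | intros; apply H; lia].
Qed.

Lemma rsum_scal K c f : rsum K (fun k => c * f k) = c * rsum K f.
Proof. induction K; simpl; [ring | rewrite IHK; ring]. Qed.

Lemma rsum_minus K f g : rsum K (fun k => f k - g k) = rsum K f - rsum K g.
Proof. induction K; simpl; [ring | rewrite IHK; ring]. Qed.

Lemma rsum_pos K f : (0 < K)%nat -> (forall k, (k < K)%nat -> 0 < f k) -> 0 < rsum K f.
Proof.
  induction K as [|K IH]; intros HK Hf; simpl; [lia|].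
  assert (0 < f K) by (apply Hf; lia).
  destruct K; [simpl; lra|].
  assert (0 < rsum (S K) f) by (apply IH; [lia | intros; apply Hf; lia]). lra.
Qed.

Lemma rsum_mul_rsum K1 K2 f g :
  rsum K1 f * rsum K2 g = rsum K1 (fun k => rsum K2 (fun j => f k * g j)).
Proof.
  induction K1; simpl; [ring|].
  rewrite <- IHK1, Rmult_plus_distr_r, rsum_scal. reflexivity.
Qed.

Lemma rsum_add_range a b f : rsum (a + b) f = rsum a f + rsum b (fun j => f (a + j)%nat).
Proof.
  induction b; simpl; [rewrite Nat.add_0_r; ring|].
  rewrite Nat.add_succ_r; simpl. rewrite IHb. ring.
Qed.

Lemma rsum_rsum_flatten K1 K2 F :
  rsum K1 (fun k => rsum K2 (fun j => F k j)) =
  rsum (K1 * K2) (fun p => F (p / K2)%nat (p mod K2)%nat).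
Proof.
  induction K1; simpl; [reflexivity|].
  rewrite Nat.add_comm, rsum_add_range, IHK1. f_equal.
  apply rsum_ext. intros j Hj.
  replace (K1 * K2 + j)%nat with (j + K1 * K2)%nat by lia.
  rewrite Nat.div_add, Nat.Div0.mod_add, Nat.div_small, Nat.mod_small by lia. reflexivity.
Qed.

Definition increasing_on (m : nat) (x : nat -> R) : Prop :=
  forall i, (S i < m)%nat -> x i < x (S i).

Lemma increasing_on_lt m x : increasing_on m x ->
  forall i j, (i < j)%nat -> (j < m)%nat -> x i < x j.
Proof.
  intros Hx i j Hij. induction Hij as [|j Hij IH]; intros Hj.
  - apply Hx; lia.
  - apply Rlt_trans with (x j); [apply IH; lia | apply Hx; lia].
Qed.

Lemma exists_argmax n (z : nat -> R) :
  exists M, (M < S n)%nat /\ forall i, (i < S n)%nat -> z i <= z M.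
Proof.
  induction n as [|n [M [HM Hmax]]].
  - exists 0%nat. split; [lia|]. intros i Hi. replace i with 0%nat by lia. lra.
  - destruct (Rle_lt_dec (z (S n)) (z M)) as [Hle|Hlt].
    + exists M. split; [lia|]. intros i Hi.
      destruct (Nat.eq_dec i (S n)) as [->|]; [exact Hle | apply Hmax; lia].
    + exists (S n). split; [lia|]. intros i Hi.
      destruct (Nat.eq_dec i (S n)) as [->|]; [lra|].
      specialize (Hmax i ltac:(lia)). lra.
Qed.

Lemma increasing_rearrangement n (P : R -> Prop) (z : nat -> R) :
  (forall i j, (i < n)%nat -> (j < n)%nat -> i <> j -> z i <> z j) ->
  (forall i, (i < n)%nat -> P (z i)) ->
  exists x, increasing_on n x /\ forall i, (i < n)%nat -> P (x i).
Proof.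
  revert P z. induction n as [|n IH]; intros P z Hinj HP.
  { exists z. split; intros i Hi; lia. }
  destruct (exists_argmax n z) as [M [HM Hmax]].
  (* [skip i] enumerates the indices below [S n] other than [M] *)
  set (skip := fun i => if (i <? M)%nat then i else S i).
  assert (Hskip : forall i, (i < n)%nat -> (skip i < S n)%nat /\ skip i <> M).
  { intros i Hi. unfold skip. destruct (Nat.ltb_spec i M); lia. }
  assert (Hskip_inj : forall i j, skip i = skip j -> i = j).
  { intros i j. unfold skip. destruct (Nat.ltb_spec i M), (Nat.ltb_spec j M); lia. }
  destruct (IH (fun r => P r /\ r < z M) (fun i => z (skip i))) as [x [Hx HPx]].
  - intros i j Hi Hj Hij. destruct (Hskip i Hi), (Hskip j Hj).
    apply Hinj; auto.
  - intros i Hi. destruct (Hskip i Hi) as [Hlt Hne]. split; [apply HP; exact Hlt|].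
    assert (z (skip i) <> z M) by (apply Hinj; auto).
    specialize (Hmax _ Hlt). lra.
  - exists (fun i => if (i <? n)%nat then x i else z M). split.
    + intros i Hi.
      destruct (Nat.ltb_spec i n) as [Hi'|Hi'], (Nat.ltb_spec (S i) n) as [HSi|HSi]; try lia.
      * apply Hx. exact HSi.
      * apply HPx. exact Hi'.
    + intros i Hi. destruct (Nat.ltb_spec i n) as [Hi'|Hi'].
      * apply HPx. exact Hi'.
      * apply HP. exact HM.
Qed.

Lemma constant_of_is_derive_0 (f : R -> R) :
  (forall z, is_derive f z 0) -> forall a b, f a = f b.
Proof.
  intros Hf.
  assert (Hlt : forall a b, a < b -> f a = f b).
  { intros a b Hab. destruct (MVT_cor2 f (fun _ => 0) a b Hab) as [c [Hc _]].
    - intros c _. apply is_derive_Reals, Hf.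
    - lra. }
  intros a b. destruct (Rtotal_order a b) as [H|[->|H]]; auto.
  symmetry. auto.
Qed.

Lemma increasing_roots_of_derive (f f' : R -> R) m (x : nat -> R) :
  (forall z, is_derive f z (f' z)) ->
  increasing_on (S m) x -> (forall i, (i < S m)%nat -> f (x i) = 0) ->
  exists y, increasing_on m y /\ forall i, (i < m)%nat -> f' (y i) = 0.
Proof.
  intros Hf Hx Hroots.
  assert (Hbetween : forall i, exists y, (i < m)%nat -> x i < y < x (S i) /\ f' y = 0).
  { intros i. destruct (Compare_dec.lt_dec i m) as [Hi|Hi]; [|exists 0; intros; lia].
    assert (Hlt : x i < x (S i)) by (apply Hx; lia).
    destruct (MVT_cor2 f f' _ _ Hlt) as [y [Hy Hbounds]].
    { intros c _. apply is_derive_Reals, Hf. }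
    exists y. intros _. split; [exact Hbounds|].
    rewrite !Hroots in Hy by lia.
    apply (Rmult_eq_reg_r (x (S i) - x i)); lra. }
  destruct (functional_choice _ Hbetween) as [y Hy].
  exists y. split.
  - intros i Hi. destruct (Hy i ltac:(lia)) as [[_ H1] _].
    destruct (Hy (S i) Hi) as [[H2 _] _]. lra.
  - intros i Hi. apply (Hy i Hi).
Qed.

(** * Exponential sums *)

Definition expsum (m : nat) (a c : nat -> R) (z : R) : R :=
  rsum m (fun p => a p * exp (c p * z)).

Lemma expsum_S m a c z : expsum (S m) a c z = expsum m a c z + a m * exp (c m * z).
Proof. reflexivity. Qed.

Lemma expsum_scal m a c C z : C * expsum m a c z = expsum m (fun p => C * a p) c z.
Proof. unfold expsum. rewrite <- rsum_scal. apply rsum_ext. intros. ring. Qed.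

Lemma expsum_factor m a c t z :
  expsum m a c z = exp (t * z) * expsum m a (fun p => c p - t) z.
Proof.
  unfold expsum. rewrite <- rsum_scal. apply rsum_ext. intros p _.
  replace (c p * z) with (t * z + (c p - t) * z) by ring. rewrite exp_plus. ring.
Qed.

Lemma expsum_pos m a c z :
  (0 < m)%nat -> (forall p, (p < m)%nat -> 0 < a p) -> 0 < expsum m a c z.
Proof.
  intros Hm Ha. apply rsum_pos; [exact Hm|].
  intros p Hp. apply Rmult_lt_0_compat; [apply Ha, Hp | apply exp_pos].
Qed.

Lemma is_derive_expsum m a c z :
  is_derive (expsum m a c) z (expsum m (fun p => a p * c p) c z).
Proof.
  induction m.
  - unfold expsum. simpl. auto_derive; auto.
  - apply (is_derive_ext (fun w => expsum m a c w + a m * exp (c m * w))); [reflexivity|].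
    rewrite expsum_S.
    apply (is_derive_plus (expsum m a c) (fun w => a m * exp (c m * w))); [exact IHm|].
    auto_derive; [exact I | ring].
Qed.

Lemma expsum_zero_of_roots m : forall a c (x : nat -> R),
  increasing_on m x -> (forall i, (i < m)%nat -> expsum m a c (x i) = 0) ->
  forall z, expsum m a c z = 0.
Proof.
  induction m as [|m IH]; intros a c x Hx Hroots z; [reflexivity|].
  set (G := fun w => expsum m a (fun p => c p - c m) w + a m).
  assert (HG : forall w, expsum (S m) a c w = exp (c m * w) * G w).
  { intros w. unfold G. rewrite expsum_S, (expsum_factor m a c (c m)). ring. }
  assert (HGroots : forall i, (i < S m)%nat -> G (x i) = 0).
  { intros i Hi. specialize (Hroots i Hi). rewrite HG in Hroots.
    destruct (Rmult_integral _ _ Hroots) as [H|H]; [|exact H].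
    pose proof (exp_pos (c m * x i)). lra. }
  set (G' := expsum m (fun p => a p * (c p - c m)) (fun p => c p - c m)).
  assert (HdG : forall w, is_derive G w (G' w)).
  { intros w. unfold G, G'. rewrite <- (Rplus_0_r (expsum _ _ _ w)).
    apply (is_derive_plus (expsum m a (fun p => c p - c m)) (fun _ => a m));
      [apply is_derive_expsum | auto_derive; auto]. }
  destruct (increasing_roots_of_derive G G' m x HdG Hx HGroots) as [y [Hy Hyroots]].
  assert (HG' : forall w, G' w = 0) by exact (IH _ _ y Hy Hyroots).
  assert (HGconst : G z = G (x 0%nat)).
  { apply constant_of_is_derive_0. intros w. rewrite <- (HG' w). apply HdG. }
  rewrite HG, HGconst, HGroots by lia. ring.
Qed.

Lemma is_lim_exp_neg c : c < 0 -> is_lim (fun z => exp (c * z)) p_infty 0.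
Proof.
  intros Hc. apply (is_lim_comp exp (fun z => c * z) p_infty 0 m_infty).
  - apply is_lim_exp_m.
  - assert (Hinf : Rbar_mult c p_infty = m_infty).
    { simpl. destruct (Rle_dec 0 c); [exfalso; lra | reflexivity]. }
    rewrite <- Hinf. apply is_lim_scal_l, is_lim_id.
  - exists 0. intros. discriminate.
Qed.

Lemma is_lim_expsum_neg m a c :
  (forall p, (p < m)%nat -> c p < 0) -> is_lim (expsum m a c) p_infty 0.
Proof.
  induction m as [|m IH]; intros Hc.
  - unfold expsum. simpl. apply is_lim_const.
  - apply (is_lim_ext (fun z => expsum m a c z + a m * exp (c m * z))); [reflexivity|].
    replace (Finite 0) with (Finite (0 + a m * 0)) by (f_equal; ring).
    apply (is_lim_plus' (expsum m a c) (fun z => a m * exp (c m * z))).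
    + apply IH. intros. apply Hc. lia.
    + apply (is_lim_scal_l (fun z => exp (c m * z)) (a m) p_infty 0).
      apply is_lim_exp_neg, Hc. lia.
Qed.

(* Factoring out e^{tz}, all other terms tend to 0 at +oo. *)
Lemma expsum_dominant_coef K1 K2 a b c d t al be :
  (forall k, (k < K1)%nat -> c k < t) -> (forall k, (k < K2)%nat -> d k < t) ->
  (forall z, expsum K1 a c z + al * exp (t * z) = expsum K2 b d z + be * exp (t * z)) ->
  al = be.
Proof.
  intros Hc Hd H.
  set (F1 := fun z => expsum K1 a (fun k => c k - t) z + al).
  set (F2 := fun z => expsum K2 b (fun k => d k - t) z + be).
  assert (HF : forall z, F1 z = F2 z).
  { intros z. apply (Rmult_eq_reg_l (exp (t * z))); [|apply Rgt_not_eq, exp_pos].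
    unfold F1, F2. rewrite !Rmult_plus_distr_l, <- !expsum_factor.
    specialize (H z). lra. }
  assert (L1 : is_lim F1 p_infty (0 + al)).
  { apply is_lim_plus'; [|apply is_lim_const].
    apply is_lim_expsum_neg. intros k Hk. specialize (Hc k Hk). lra. }
  assert (L2 : is_lim F1 p_infty (0 + be)).
  { apply (is_lim_ext F2); [intros; symmetry; apply HF|].
    apply is_lim_plus'; [|apply is_lim_const].
    apply is_lim_expsum_neg. intros k Hk. specialize (Hd k Hk). lra. }
  apply is_lim_unique in L1. apply is_lim_unique in L2.
  rewrite L1 in L2. injection L2. lra.
Qed.

Lemma expsum_top_exponent_le K1 K2 a b mu nu :
  increasing_on (S K1) mu -> increasing_on (S K2) nu -> 0 < b K2 ->
  (forall z, expsum (S K1) a mu z = expsum (S K2) b nu z) -> nu K2 <= mu K1.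
Proof.
  intros Hmu Hnu Hb H. apply Rnot_lt_le. intros Hlt.
  assert (0 = b K2); [|lra].
  apply (expsum_dominant_coef (S K1) K2 a b mu nu (nu K2)).
  - intros k Hk. destruct (Nat.eq_dec k K1) as [->|]; [exact Hlt|].
    pose proof (increasing_on_lt _ _ Hmu k K1 ltac:(lia) ltac:(lia)). lra.
  - intros k Hk. apply (increasing_on_lt _ _ Hnu); lia.
  - intros z. rewrite Rmult_0_l, Rplus_0_r. apply H.
Qed.

Lemma expsum_inj K1 : forall K2 a b mu nu,
  (forall k, (k < K1)%nat -> 0 < a k) -> (forall k, (k < K2)%nat -> 0 < b k) ->
  increasing_on K1 mu -> increasing_on K2 nu ->
  (forall z, expsum K1 a mu z = expsum K2 b nu z) ->
  K1 = K2 /\ forall k, (k < K1)%nat -> a k = b k /\ mu k = nu k.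
Proof.
  induction K1 as [|K1 IH]; intros [|K2] a b mu nu Ha Hb Hmu Hnu H.
  - split; [reflexivity | intros; lia].
  - exfalso. pose proof (expsum_pos (S K2) b nu 0 ltac:(lia) Hb) as Hpos.
    rewrite <- H in Hpos. unfold expsum in Hpos. simpl in Hpos. lra.
  - exfalso. pose proof (expsum_pos (S K1) a mu 0 ltac:(lia) Ha) as Hpos.
    rewrite H in Hpos. unfold expsum in Hpos. simpl in Hpos. lra.
  - assert (Htop : mu K1 = nu K2).
    { apply Rle_antisym.
      - apply (expsum_top_exponent_le K2 K1 b a nu mu Hnu Hmu).
        + apply Ha. lia.
        + intros z. symmetry. apply H.
      - apply (expsum_top_exponent_le K1 K2 a b mu nu Hmu Hnu).
        + apply Hb. lia.
        + exact H. }
    assert (Hcoef : a K1 = b K2).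
    { apply (expsum_dominant_coef K1 K2 a b mu nu (mu K1)).
      - intros k Hk. apply (increasing_on_lt _ _ Hmu); lia.
      - intros k Hk. rewrite Htop. apply (increasing_on_lt _ _ Hnu); lia.
      - intros z. rewrite Htop at 2. apply H. }
    destruct (IH K2 a b mu nu) as [-> Hlower].
    + intros. apply Ha. lia.
    + intros. apply Hb. lia.
    + intros i Hi. apply Hmu. lia.
    + intros i Hi. apply Hnu. lia.
    + intros z. specialize (H z). rewrite !expsum_S, Hcoef, Htop in H. lra.
    + split; [reflexivity|]. intros k Hk.
      destruct (Nat.eq_dec k K2) as [->|]; [auto | apply Hlower; lia].
Qed.

(* The index p < K1 * K2 encodes the pair (p / K2, p mod K2). *)
Definition cross_coef (K2 : nat) (a b mu nu : nat -> R) (p : nat) : R :=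
  a (p / K2)%nat * b (p mod K2)%nat * (mu (p / K2)%nat - nu (p mod K2)%nat).

Definition cross_exponent (K2 : nat) (mu nu : nat -> R) (p : nat) : R :=
  mu (p / K2)%nat + nu (p mod K2)%nat.

Definition cross_expsum (K1 K2 : nat) (a b mu nu : nat -> R) : R -> R :=
  expsum (K1 * K2) (cross_coef K2 a b mu nu) (cross_exponent K2 mu nu).

Lemma expsum_cross K1 K2 a b mu nu z :
  expsum K1 (fun k => a k * mu k) mu z * expsum K2 b nu z -
  expsum K1 a mu z * expsum K2 (fun j => b j * nu j) nu z =
  cross_expsum K1 K2 a b mu nu z.
Proof.
  unfold cross_expsum, expsum, cross_coef, cross_exponent. rewrite !rsum_mul_rsum, <- rsum_minus.
  rewrite <- (rsum_rsum_flatten K1 K2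
    (fun k j => a k * b j * (mu k - nu j) * exp ((mu k + nu j) * z))).
  apply rsum_ext. intros k _. rewrite <- rsum_minus.
  apply rsum_ext. intros j _. rewrite Rmult_plus_distr_r, exp_plus. ring.
Qed.

Lemma expsum_proportional K1 K2 a b mu nu :
  (forall z, 0 < expsum K2 b nu z) ->
  (forall z, cross_expsum K1 K2 a b mu nu z = 0) ->
  forall z, expsum K1 a mu z = expsum K1 a mu 0 / expsum K2 b nu 0 * expsum K2 b nu z.
Proof.
  intros Hpos Hcross z.
  assert (Hquot : forall w, expsum K1 a mu w / expsum K2 b nu w =
                            expsum K1 a mu 0 / expsum K2 b nu 0).
  { intros v. apply (constant_of_is_derive_0 (fun w => expsum K1 a mu w / expsum K2 b nu w)).
    intros w. pose proof (Hpos w).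
    replace 0 with ((expsum K1 (fun k => a k * mu k) mu w * expsum K2 b nu w -
                     expsum K1 a mu w * expsum K2 (fun j => b j * nu j) nu w) /
                    expsum K2 b nu w ^ 2)
      by (rewrite expsum_cross, Hcross; unfold Rdiv; ring).
    apply is_derive_div; [apply is_derive_expsum | apply is_derive_expsum | lra]. }
  rewrite <- (Hquot z). pose proof (Hpos z). field. lra.
Qed.

(** * Normal location mixtures *)

Definition mix_weight (tau mu : nat -> R) (k : nat) : R := tau k * exp (- (mu k ^ 2) / 2).

Lemma mix_weight_pos tau mu k : 0 < tau k -> 0 < mix_weight tau mu k.
Proof. intros Hk. apply Rmult_lt_0_compat; [exact Hk | apply exp_pos]. Qed.

Lemma phi_pos z : 0 < phi z.
Proof.
  apply Rdiv_lt_0_compat; [apply exp_pos|].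
  apply sqrt_lt_R0. pose proof PI_RGT_0. lra.
Qed.

Lemma phi_shift z m : phi (z - m) = phi z * (exp (- (m ^ 2) / 2) * exp (m * z)).
Proof.
  unfold phi. rewrite <- !exp_plus.
  replace (- ((z - m) ^ 2) / 2) with (- (z ^ 2) / 2 + (- (m ^ 2) / 2 + m * z)) by field.
  rewrite exp_plus. unfold Rdiv. ring.
Qed.

Lemma ratio_expsum K tau mu z :
  expsum K (mix_weight tau mu) mu z <> 0 ->
  ratio K tau mu z =
  z - expsum K (fun k => mix_weight tau mu k * mu k) mu z / expsum K (mix_weight tau mu) mu z.
Proof.
  intros Hh. unfold ratio.
  assert (Hden : rsum K (fun k => tau k * phi (z - mu k)) =
                 phi z * expsum K (mix_weight tau mu) mu z).
  { unfold expsum. rewrite <- rsum_scal. apply rsum_ext. intros k _.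
    rewrite phi_shift. unfold mix_weight. ring. }
  assert (Hnum : rsum K (fun k => tau k * (z - mu k) * phi (z - mu k)) =
                 phi z * (z * expsum K (mix_weight tau mu) mu z -
                          expsum K (fun k => mix_weight tau mu k * mu k) mu z)).
  { unfold expsum. rewrite <- rsum_scal, <- rsum_minus, <- rsum_scal. apply rsum_ext. intros k _.
    rewrite phi_shift. unfold mix_weight. ring. }
  rewrite Hden, Hnum. pose proof (phi_pos z). field. lra.
Qed.

Lemma cross_zero_of_ratio_eq K1 K2 tau mu vs nu z :
  0 < expsum K1 (mix_weight tau mu) mu z -> 0 < expsum K2 (mix_weight vs nu) nu z ->
  ratio K1 tau mu z = ratio K2 vs nu z ->
  cross_expsum K1 K2 (mix_weight tau mu) (mix_weight vs nu) mu nu z = 0.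
Proof.
  intros H1 H2 Hr. rewrite <- expsum_cross.
  rewrite !ratio_expsum in Hr by lra.
  set (h1 := expsum K1 (mix_weight tau mu) mu z) in *.
  set (h2 := expsum K2 (mix_weight vs nu) nu z) in *.
  set (d1 := expsum K1 (fun k => mix_weight tau mu k * mu k) mu z) in *.
  set (d2 := expsum K2 (fun j => mix_weight vs nu j * nu j) nu z) in *.
  replace (d1 * h2 - h1 * d2) with ((d1 / h1 - d2 / h2) * (h1 * h2)) by (field; lra).
  replace (d1 / h1 - d2 / h2) with 0 by lra. ring.
Qed.

Lemma mixture_eq_of_weights K tau mu vs nu C :
  rsum K tau = 1 -> rsum K vs = 1 ->
  (forall k, (k < K)%nat -> mix_weight tau mu k = C * mix_weight vs nu k /\ mu k = nu k) ->
  forall k, (k < K)%nat -> tau k = vs k /\ mu k = nu k.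
Proof.
  intros Htau Hvs H.
  assert (Hprop : forall k, (k < K)%nat -> tau k = C * vs k).
  { intros k Hk. destruct (H k Hk) as [Hw Hm]. unfold mix_weight in Hw. rewrite Hm in Hw.
    apply (Rmult_eq_reg_r (exp (- (nu k ^ 2) / 2))); [|apply Rgt_not_eq, exp_pos].
    rewrite Hw. ring. }
  assert (HC : C = 1).
  { rewrite <- Htau, (rsum_ext K tau _ Hprop), rsum_scal, Hvs. ring. }
  intros k Hk. split; [rewrite Hprop, HC by exact Hk; ring | apply H, Hk].
Qed.

Theorem mainTheorem7 :
  forall (J n : nat) (z : nat -> R) (K1 K2 : nat) (tau mu vs nu : nat -> R),
    (1 <= J)%nat ->
    (J * J <= n)%nat ->
    (forall i j, (i < n)%nat -> (j < n)%nat -> i <> j -> z i <> z j) ->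
    (1 <= K1 <= J)%nat ->
    (1 <= K2 <= J)%nat ->
    InT K1 tau mu ->
    InT K2 vs nu ->
    (forall i, (i < n)%nat -> ratio K1 tau mu (z i) = ratio K2 vs nu (z i)) ->
    K1 = K2 /\ (forall k, (k < K1)%nat -> tau k = vs k /\ mu k = nu k).
Proof.
  intros J n z K1 K2 tau mu vs nu _ HJn Hz HK1 HK2 [Htau [Hstau Hmu]] [Hvs [Hsvs Hnu]] Hr.
  set (w1 := mix_weight tau mu). set (w2 := mix_weight vs nu).
  assert (Hh1 : forall w, 0 < expsum K1 w1 mu w)
    by (intros; apply expsum_pos; [lia | intros; apply mix_weight_pos; auto]).
  assert (Hh2 : forall w, 0 < expsum K2 w2 nu w)
    by (intros; apply expsum_pos; [lia | intros; apply mix_weight_pos; auto]).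
  destruct (increasing_rearrangement n (fun w => cross_expsum K1 K2 w1 w2 mu nu w = 0) z Hz)
    as [x [Hx Hroots]].
  { intros i Hi. apply cross_zero_of_ratio_eq; auto. }
  assert (Hcross : forall w, cross_expsum K1 K2 w1 w2 mu nu w = 0).
  { apply (expsum_zero_of_roots _ _ _ x); intros i Hi; [apply Hx | apply Hroots]; nia. }
  set (C := expsum K1 w1 mu 0 / expsum K2 w2 nu 0).
  assert (HC : 0 < C) by (apply Rdiv_lt_0_compat; auto).
  destruct (expsum_inj K1 K2 w1 (fun k => C * w2 k) mu nu) as [<- Hcoef]; auto.
  - intros k Hk. apply mix_weight_pos, Htau, Hk.
  - intros k Hk. apply Rmult_lt_0_compat; [exact HC | apply mix_weight_pos, Hvs, Hk].
  - intros w. rewrite <- expsum_scal. apply expsum_proportional; auto.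
  - split; [reflexivity|]. exact (mixture_eq_of_weights K1 tau mu vs nu C Hstau Hsvs Hcoef).
Qed.
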